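(* The group $\mathrm{GO}(S)^\circ$ acts freely on $\tau^{-1}(CZ_{r,n} \cup CZ_{r-1,n}) \subset \mathrm{Hom}(V,S)$.
   Context: Work over $\mathbb{C}$. Let $V = \mathbb{C}^n$, $r \le n$ even, $S = \mathbb{C}^r$ with a nondegenerate quadratic form $\omega_S$. $\mathrm{GO}(S)$ is the group of invertible linear $\phi: S\to S$ with $\omega_S(\phi v,\phi v) = \chi(\phi)\omega_S(v,v)$ for some $\chi(\phi)\in\mathbb{C}^*$. $\mathrm{GO}(S)$ acts on the orthogonal Grassmannian $\mathrm{OG}(r/2,S)$ of maximal isotropic subspaces, which has two connected components; $\mathrm{GO}(S)^\circ$ is the kernel of the induced homomorphism $\mathrm{GO}(S) \to \mu_2$. $\mathrm{GO}(S)$ acts on $\mathrm{Hom}(V,S)$ by $(\phi,f)\mapsto \phi\circ f$. Let $\tau: \mathrm{Hom}(V,S) \to \mathrm{Sym}^2 V^\vee$, $\tau(f)(v,w) = \omega_S(f(v),f(w))$. $CZ_{k,n} \subset \mathrm{Sym}^2 V^\vee$ is the set of quadratic forms of rank exactly $k$. *)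

From HB Require Import structures.
From mathcomp Require Import all_boot all_order all_algebra.
From mathcomp Require Import complex.
From mathcomp Require Import reals.
Set Implicit Arguments. Unset Strict Implicit. Unset Printing Implicit Defensive.
Import GRing.Theory Num.Theory.
Local Open Scope ring_scope.

(* The ground field is C := R[i] for R : realType (a model of
   the complex numbers).  Vectors of V = C^n and S = C^r are row vectors;
   a linear map f : V -> S is a matrix F : 'M_(n, r) acting by v |-> v *m F;
   a linear map phi : S -> S is a matrix P : 'M_r acting by v |-> v *m P,
   so that phi o f corresponds to F *m P.  A subspace of S is the row space
   of a matrix (mxalgebra). *)

Section Defs.
Variable C : fieldType.

Definition omega (r : nat) (Q : 'M[C]_r) (v w : 'rV[C]_r) : C :=
  (v *m Q *m w^T) 0 0.

Definition nondeg_quadform (r : nat) (Q : 'M[C]_r) : Prop :=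
  Q^T = Q /\ Q \in unitmx.

Definition GO (r : nat) (Q : 'M[C]_r) (P : 'M[C]_r) : Prop :=
  P \in unitmx /\
  exists chi : C, chi != 0 /\
    forall v : 'rV[C]_r, omega Q (v *m P) (v *m P) = chi * omega Q v v.

Definition max_isotropic (r : nat) (Q : 'M[C]_r) (L : 'M[C]_r) : Prop :=
  \rank L = (r %/ 2)%N /\
  forall u : 'rV[C]_r, (u <= L)%MS -> omega Q u u = 0.

(* Two maximal isotropic subspaces L, L' of a 2m-dimensional nondegenerate
   quadratic space lie in the same connected component of OG(m, S) iff
   dim (L cap L') = m (mod 2). *)
Definition same_component (r : nat) (L L' : 'M[C]_r) : Prop :=
  \rank (L :&: L')%MS = (r %/ 2)%N %[mod 2].

(* GO(S)^o: the elements of GO(S) preserving each of the two components of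
   OG(r/2, S), i.e. the kernel of GO(S) -> mu_2. *)
Definition GO0 (r : nat) (Q : 'M[C]_r) (P : 'M[C]_r) : Prop :=
  GO Q P /\
  forall L : 'M[C]_r, max_isotropic Q L -> same_component L (L *m P).

(* tau(f)(v, w) = omega(f v, f w); as a Gram matrix on V = C^n. *)
Definition tau (n r : nat) (Q : 'M[C]_r) (F : 'M[C]_(n, r)) : 'M[C]_n :=
  F *m Q *m F^T.

Definition CZ (k n : nat) (A : 'M[C]_n) : Prop :=
  A^T = A /\ \rank A = k.

Definition acts_freely_on (n r : nat) (G : 'M[C]_r -> Prop)
  (X : 'M[C]_(n, r) -> Prop) : Prop :=
  forall F P, X F -> G P -> F *m P = F -> P = 1%:M.

End Defs.
Arguments CZ {C} k n A.

(* A stabilizer P of F fixes the image of F pointwise.  That image has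
   dimension at least r - 1 and contains an anisotropic vector, so P is an
   orthogonal transformation fixing a hyperplane: either the identity or the
   reflection in the anisotropic line e orthogonal to the image.  A reflection
   is not in GO(S)^o: completing an isotropic vector u with omega(u, e) <> 0
   to a maximal isotropic subspace L, the subspaces L and L P meet in
   dimension exactly r/2 - 1. *)

From HB Require Import structures.
From mathcomp Require Import all_boot all_order all_algebra.
From mathcomp Require Import complex.
From mathcomp Require Import reals.
From mathcomp Require Import ring zify.
From Stdlib Require Import Classical.
Set Implicit Arguments. Unset Strict Implicit. Unset Printing Implicit Defensive.
Import GRing.Theory Num.Theory.
Local Open Scope ring_scope.

Lemma mxrank1_row (F : fieldType) m n (A : 'M[F]_(m, n)) :
  \rank A = 1%N -> exists e : 'rV_n, [/\ e != 0, (e <= A)%MS & (A <= e)%MS].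
Proof.
move=> rA; have /rowV0Pn[e eA e_nz] : A != 0 by rewrite -mxrank_eq0 rA.
exists e; split=> //; rewrite -(mxrank_leqif_sup eA).2 rA.
by rewrite rank_rV e_nz.
Qed.

Section SymmetricForms.
Variable K : numFieldType.

Lemma omega_delta m (M : 'M[K]_m) i j : omega M 'e_i 'e_j = M i j.
Proof. by rewrite /omega -rowE trmx_delta -colE !mxE. Qed.

Lemma omegaDl m (M : 'M[K]_m) u v w :
  omega M (u + v) w = omega M u w + omega M v w.
Proof. by rewrite /omega !mulmxDl mxE. Qed.

Lemma omegaDr m (M : 'M[K]_m) u v w :
  omega M u (v + w) = omega M u v + omega M u w.
Proof. by rewrite /omega linearD /= mulmxDr mxE. Qed.

Lemma omegaZl m (M : 'M[K]_m) t u v : omega M (t *: u) v = t * omega M u v.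
Proof. by rewrite /omega -!scalemxAl mxE. Qed.

Lemma omegaZr m (M : 'M[K]_m) t u v : omega M u (t *: v) = t * omega M u v.
Proof. by rewrite /omega linearZ /= -scalemxAr mxE. Qed.

Lemma omega_formB m (M N : 'M[K]_m) u v :
  omega (M - N) u v = omega M u v - omega N u v.
Proof. by rewrite /omega mulmxBr mulmxBl mxE [in X in _ + X]mxE. Qed.

Lemma omega_sym m (M : 'M[K]_m) u v : M^T = M -> omega M u v = omega M v u.
Proof.
move=> Msym; rewrite /omega -[v *m M *m u^T]trmxK [in RHS]mxE.
by rewrite !trmx_mul trmxK Msym mulmxA.
Qed.

Lemma omega_mx11 m (M : 'M[K]_m) u v : u *m M *m v^T = (omega M u v)%:M.
Proof. exact: mx11_scalar. Qed.

Lemma omega_tau n m (M : 'M[K]_m) (F : 'M_(n, m)) u v :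
  omega (tau M F) u v = omega M (u *m F) (v *m F).
Proof. by rewrite /omega /tau trmx_mul !mulmxA. Qed.

Lemma sym_mx_eq0 m (M : 'M[K]_m) :
  M^T = M -> (forall v, omega M v v = 0) -> M = 0.
Proof.
move=> Msym Mv; apply/matrixP => i j; rewrite mxE.
have Mkk k : M k k = 0 by rewrite -omega_delta Mv.
have Mji : M j i = M i j by rewrite -[in LHS]Msym mxE.
move: (Mv ('e_i + 'e_j)); rewrite omegaDl !omegaDr !omega_delta !Mkk Mji.
by rewrite add0r addr0 -mulr2n => /eqP; rewrite mulrn_eq0 => /eqP.
Qed.

Lemma anisotropic_exists m (M : 'M[K]_m) :
  M^T = M -> M != 0 -> exists v, omega M v v != 0.
Proof.
move=> Msym /eqP M_nz; apply: NNPP => no_aniso; apply/M_nz/sym_mx_eq0 => // v.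
by apply: NNPP => Mv; apply: no_aniso; exists v; apply/eqP.
Qed.

Lemma col_mul_sym_eq0 m (X Z : 'cV[K]_m) :
  X *m Z^T + Z *m X^T = 0 -> X = 0 \/ Z = 0.
Proof.
move=> XZ.
have XZab a b : X a 0 * Z b 0 + Z a 0 * X b 0 = 0.
  by have := congr1 (fun A : 'M_m => A a b) XZ; rewrite !mxE !big_ord1 !mxE.
have [i Xi | X0] := pickP (fun i => X i 0 != 0); last first.
  by left; apply/matrixP => a b; rewrite !ord1 mxE; move/negbFE/eqP: (X0 a).
right; apply/matrixP => a b; rewrite ord1 mxE.
have Zi : Z i 0 = 0.
  move: (XZab i i); rewrite [Z i 0 * _]mulrC -mulr2n => /eqP.
  by rewrite mulrn_eq0 mulf_eq0 (negbTE Xi) => /eqP.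
move: (XZab i a); rewrite Zi mul0r addr0 => /eqP.
by rewrite mulf_eq0 (negbTE Xi) => /eqP.
Qed.

End SymmetricForms.

Lemma quadratic_root (C : numClosedFieldType) (a b c : C) :
  a != 0 -> exists t, c + t * b *+ 2 + t ^+ 2 * a = 0.
Proof.
move=> a_nz; exists ((- b + sqrtC (b ^+ 2 - c * a)) / a).
have := sqrtCK (b ^+ 2 - c * a); set s := sqrtC _ => s2.
apply: (mulIf a_nz); rewrite mul0r.
have -> : (c + (- b + s) / a * b *+ 2 + ((- b + s) / a) ^+ 2 * a) * a
          = c * a - b ^+ 2 + s ^+ 2 by field.
by rewrite s2; ring.
Qed.

Section QuadraticSpace.
Variables (C : numClosedFieldType) (r : nat) (Q : 'M[C]_r).
Hypotheses (Q_sym : Q^T = Q) (Q_unit : Q \in unitmx).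

Lemma trmx_form m1 m2 (A : 'M[C]_(m1, r)) (B : 'M[C]_(m2, r)) :
  (A *m Q *m B^T)^T = B *m Q *m A^T.
Proof. by rewrite !trmx_mul trmxK Q_sym mulmxA. Qed.

Lemma mulmx_form p1 p2 m1 m2 (D1 : 'M[C]_(p1, m1)) (A : 'M_(m1, r))
    (D2 : 'M_(p2, m2)) (B : 'M_(m2, r)) :
  D1 *m A *m Q *m (D2 *m B)^T = D1 *m (A *m Q *m B^T) *m D2^T.
Proof. by rewrite trmx_mul !mulmxA. Qed.

Lemma isotropic_submx m1 m2 (A : 'M[C]_(m1, r)) (B : 'M[C]_(m2, r)) :
  (A <= B)%MS -> B *m Q *m B^T = 0 -> A *m Q *m A^T = 0.
Proof. by case/submxP=> D -> BB; rewrite mulmx_form BB mulmx0 mul0mx. Qed.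

Lemma isotropic_omega m (L : 'M[C]_(m, r)) u v :
  L *m Q *m L^T = 0 -> (u <= L)%MS -> (v <= L)%MS -> omega Q u v = 0.
Proof.
move=> LL /submxP[D ->] /submxP[D' ->].
by rewrite /omega mulmx_form LL mulmx0 mul0mx mxE.
Qed.

Lemma mxrank_form_tr m (L : 'M[C]_(m, r)) : \rank (Q *m L^T) = \rank L.
Proof.
by rewrite -mxrank_tr trmx_mul trmxK Q_sym mxrankMfree ?row_free_unit.
Qed.

Lemma omega_expand u v t :
  omega Q (u + t *: v) (u + t *: v) =
  omega Q u u + t * omega Q u v *+ 2 + t ^+ 2 * omega Q v v.
Proof.
rewrite omegaDl !omegaDr !omegaZl !omegaZr (omega_sym v u Q_sym).
by rewrite mulr2n expr2; ring.
Qed.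

Lemma isotropic_outside (L : 'M[C]_r) :
  L *m Q *m L^T = 0 -> (2 * \rank L + 2 <= r)%N ->
  exists u : 'rV_r, [/\ u *m Q *m L^T = 0, ~~ (u <= L)%MS & omega Q u u = 0].
Proof.
move=> LL rL; set K := kermx (Q *m L^T).
have rK : \rank K = (r - \rank L)%N by rewrite mxrank_ker mxrank_form_tr.
have KL u : (u <= K)%MS -> u *m Q *m L^T = 0 by move/sub_kermxP; rewrite mulmxA.
have /row_subPn[i aL] : ~~ (K <= L)%MS.
  by apply/negP => /mxrankS; rewrite rK; lia.
have /row_subPn[j bLa] : ~~ (K <= L + row i K)%MS.
  apply/negP => /mxrankS; rewrite rK => rKLa.
  have := leq_of_leqif (mxrank_adds_leqif L (row i K)).
  by have := rank_leq_row (row i K); lia.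
set a := row i K in aL bLa; set b := row j K in bLa.
have [aK bK] : (a <= K)%MS /\ (b <= K)%MS by split; apply: row_sub.
have [bb | bb_nz] := eqVneq (omega Q b b) 0.
  exists b; split; [exact: KL | | exact: bb].
  by apply: contra bLa => bL; apply: submx_trans bL (addsmxSl L a).
have [t abt] := quadratic_root (omega Q a b) (omega Q a a) bb_nz.
exists (a + t *: b); split; last by rewrite omega_expand.
  by apply: KL; apply: addmx_sub => //; apply: scalemx_sub.
apply: contra bLa => abL.
have t_nz : t != 0.
  by apply: contraNneq aL => t0; move: abL; rewrite t0 scale0r addr0.
have -> : b = t^-1 *: ((a + t *: b) - a).
  by rewrite addrC addKr scalerA mulVf // scale1r.
apply/scalemx_sub/addmx_sub; first exact: submx_trans abL (addsmxSl L a).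
by rewrite -scaleN1r; apply/scalemx_sub/addsmxSr.
Qed.

Lemma isotropic_extend (L : 'M[C]_r) :
  L *m Q *m L^T = 0 -> (2 * \rank L + 2 <= r)%N ->
  exists L' : 'M[C]_r,
    [/\ L' *m Q *m L'^T = 0, (L <= L')%MS & \rank L' = (\rank L).+1].
Proof.
move=> LL rL; have [u [uL u_notin uu]] := isotropic_outside LL rL.
exists (L + u)%MS; split; first 1 last.
- exact: addsmxSl.
- have : (\rank L < \rank (L + u))%N.
    rewrite (ltn_leqif (mxrank_leqif_sup (addsmxSl L u))).
    by apply: contra u_notin; apply: submx_trans (addsmxSr L u).
  have := leq_of_leqif (mxrank_adds_leqif L u); have := rank_leq_row u; lia.
have /sub_addsmxP[[D1 D2] /= ->] := submx_refl (L + u)%MS.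
have Lu : L *m Q *m u^T = 0 by rewrite -trmx_form uL trmx0.
rewrite linearD /= !mulmxDl !mulmxDr !mulmx_form LL Lu uL omega_mx11 uu.
by rewrite mul_mx_scalar scale0r !mulmx0 !mul0mx !addr0.
Qed.

Lemma isotropic_complete (u : 'rV[C]_r) :
  omega Q u u = 0 -> u != 0 -> (2 <= r)%N ->
  exists L : 'M[C]_r,
    [/\ L *m Q *m L^T = 0, (u <= L)%MS & \rank L = (r %/ 2)%N].
Proof.
move=> uu u_nz r_ge2.
suff grow k : (k < r %/ 2)%N -> exists L : 'M[C]_r,
    [/\ L *m Q *m L^T = 0, (u <= L)%MS & \rank L = k.+1].
  by have := grow (r %/ 2).-1; rewrite prednK ?divn_gt0 //; apply.
elim: k => [_ | k IHk k_lt].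
  exists <<u>>%MS; rewrite !genmxE rank_rV u_nz; split=> //.
  apply: (@isotropic_submx _ _ _ u); first by rewrite genmxE.
  by rewrite omega_mx11 uu raddf0.
have [L [LL uL rL]] := IHk (ltnW k_lt).
have [|L' [LL' LL'sub rL']] := isotropic_extend LL.
  by have := leq_divM r 2; rewrite rL; lia.
by exists L'; split; [| apply: submx_trans uL LL'sub | rewrite rL' rL].
Qed.

(* For isotropic [e] the division by zero makes this the identity matrix. *)
Definition reflection (e : 'rV[C]_r) : 'M[C]_r :=
  1%:M - (2 / omega Q e e) *: (Q *m e^T *m e).

Lemma reflectionE e v :
  v *m reflection e = v - (2 * omega Q v e / omega Q e e) *: e.
Proof.
rewrite mulmxBr mulmx1 -scalemxAr !mulmxA omega_mx11 mul_scalar_mx.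
by rewrite scalerA mulrAC.
Qed.

Lemma exists_isotropic_nonorthogonal e w :
  omega Q e e != 0 -> omega Q w w != 0 -> omega Q w e = 0 ->
  exists u, omega Q u u = 0 /\ omega Q u e != 0.
Proof.
move=> ee ww we; have [t et] := quadratic_root (omega Q e w) (omega Q e e) ww.
exists (e + t *: w); split; first by rewrite omega_expand.
by rewrite omegaDl omegaZl we mulr0 addr0.
Qed.

Lemma reflection_mxrank_cap e u (L : 'M[C]_r) :
  omega Q e e != 0 -> reflection e \in unitmx ->
  L *m Q *m L^T = 0 -> (u <= L)%MS -> omega Q u e != 0 ->
  (\rank (L :&: L *m reflection e)).+1 = \rank L.
Proof.
move=> ee P_unit LL uL ue; set P := reflection e.
have rLP : \rank (L *m P) = \rank L by rewrite mxrankMfree ?row_free_unit.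
have LPsub : (L + L *m P <= L + e)%MS.
  rewrite addsmx_sub addsmxSl /P /reflection mulmxBr mulmx1 -scalemxAr !mulmxA.
  apply: addmx_sub; first exact: addsmxSl.
  rewrite -scaleN1r; apply/scalemx_sub/scalemx_sub.
  exact: submx_trans (submxMl _ _) (addsmxSr _ _).
have cap_lt : (\rank (L :&: L *m P) < \rank L)%N.
  rewrite (ltn_leqif (mxrank_leqif_sup (capmxSl L (L *m P)))).
  apply/negP => L_cap; have L_LP := submx_trans L_cap (capmxSr L (L *m P)).
  have /andP[_ LPL] : (L == L *m P)%MS by rewrite -(mxrank_leqif_eq L_LP).2 rLP.
  have uPL : (u *m P <= L)%MS := submx_trans (submxMr P uL) LPL.
  have c_nz : 2 * omega Q u e / omega Q e e != 0.
    by rewrite !mulf_neq0 ?invr_eq0 ?pnatr_eq0.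
  have eL : (e <= L)%MS.
    have -> : e = (2 * omega Q u e / omega Q e e)^-1 *: (u - u *m P).
      by rewrite reflectionE opprB addrC subrK scalerA mulVf ?scale1r.
    by apply/scalemx_sub/addmx_sub => //; rewrite -scaleN1r; apply: scalemx_sub.
  by move: ue; rewrite (isotropic_omega LL uL eL) eqxx.
have := mxrank_sum_cap L (L *m P); have := mxrankS LPsub.
by have := leq_of_leqif (mxrank_adds_leqif L e); have := rank_leq_row e; lia.
Qed.

Lemma reflection_notin_GO0 e w :
  (2 <= r)%N -> omega Q e e != 0 -> omega Q w w != 0 -> omega Q w e = 0 ->
  ~ GO0 Q (reflection e).
Proof.
move=> r_ge2 ee ww we [[P_unit _] same_comp].
have [u [uu ue]] := exists_isotropic_nonorthogonal ee ww we.
have u_nz : u != 0 by apply: contraNneq ue => ->; rewrite /omega !mul0mx mxE.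
have [L [LL uL rL]] := isotropic_complete uu u_nz r_ge2.
have L_max : max_isotropic Q L.
  by split=> // v vL; exact: (isotropic_omega LL vL vL).
have := same_comp L L_max; rewrite /same_component.
have := reflection_mxrank_cap ee P_unit LL uL ue; rewrite rL.
have : (0 < r %/ 2)%N by rewrite divn_gt0.
by move: (\rank _) (r %/ 2)%N => k m; lia.
Qed.

Lemma GO_fix_orthogonal P w :
  GO Q P -> w *m P = w -> omega Q w w != 0 -> P *m Q *m P^T = Q.
Proof.
move=> [_ [chi [_ chiP]]] wP ww.
have chi1 : chi = 1 by apply: (mulIf ww); rewrite -chiP wP mul1r.
apply/eqP; rewrite -subr_eq0; apply/eqP/sym_mx_eq0 => [|v].
  by rewrite linearB /= trmx_form Q_sym.
rewrite omega_formB.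
have -> : omega (P *m Q *m P^T) v v = omega Q (v *m P) (v *m P).
  by rewrite /omega trmx_mul !mulmxA.
by rewrite chiP chi1 mul1r subrr.
Qed.

Lemma orthogonal_fix_kermx n (F : 'M[C]_(n, r)) P :
  P *m Q *m P^T = Q -> F *m P = F -> (P - 1%:M <= kermx (Q *m F^T))%MS.
Proof.
move=> PQ FP; apply/sub_kermxP.
by rewrite mulmxBl mul1mx -{1}FP trmx_mul !mulmxA PQ subrr.
Qed.

Lemma orthogonal_rank1_update (X : 'cV[C]_r) e :
  e != 0 -> (1%:M + X *m e) *m Q *m (1%:M + X *m e)^T = Q ->
  X = 0 \/ omega Q e e != 0 /\ 1%:M + X *m e = reflection e.
Proof.
move=> e_nz; set y := Q *m e^T; set s := omega Q e e.
have XeQ : X *m e *m Q = X *m y^T by rewrite /y trmx_mul Q_sym trmxK mulmxA.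
have QXe : Q *m (X *m e)^T = y *m X^T by rewrite trmx_mul mulmxA.
have XeQXe : X *m e *m Q *m (X *m e)^T = s *: (X *m X^T).
  by rewrite mulmx_form omega_mx11 mul_mx_scalar -scalemxAl.
rewrite linearD /= trmx1 !mulmxDl !mulmxDr !mul1mx !mulmx1 XeQXe XeQ QXe.
rewrite -addrA -[X in _ = X]addr0 => /addrI PQ.
have XyyX : X *m y^T + y *m X^T + s *: (X *m X^T) = 0.
  by rewrite -PQ addrA (addrC (X *m y^T)).
have : X *m (y *+ 2 + s *: X)^T + (y *+ 2 + s *: X) *m X^T = 0.
  rewrite linearD linearZ /= raddfMn /= !mulr2n !mulmxDr !mulmxDl.
  rewrite -scalemxAr -scalemxAl -[RHS](addr0 0) -[in RHS]XyyX.
  by rewrite addrACA [RHS]addrACA; congr (_ + _); rewrite [RHS]addrACA.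
case/col_mul_sym_eq0 => [|y2X]; [by left | right].
have y0_e0 : y = 0 -> e = 0.
  by move=> y0; rewrite -[e]trmxK -[e^T](mulKmx Q_unit) -/y y0 mulmx0 trmx0.
have s_nz : s != 0.
  apply: contra e_nz => /eqP s0; apply/eqP/y0_e0.
  move: y2X; rewrite s0 scale0r addr0 -scaler_nat => /(congr1 ( *:%R 2^-1)).
  by rewrite scalerA mulVf ?pnatr_eq0 // scale1r scaler0.
split=> //; suff -> : X = - (2 / s) *: y by rewrite -scalemxAl scaleNr.
apply: (scalerI s_nz); rewrite scalerA (_ : s * - (2 / s) = - 2); last by field.
by move/eqP: y2X; rewrite addrC addr_eq0 => /eqP ->; rewrite scaleNr scaler_nat.
Qed.

Lemma orthogonal_fix_corank1 n (F : 'M[C]_(n, r)) P :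
  \rank F = r.-1 -> (0 < r)%N -> P *m Q *m P^T = Q -> F *m P = F ->
  P = 1%:M \/
  exists e, [/\ omega Q e e != 0, e *m Q *m F^T = 0 & P = reflection e].
Proof.
move=> rF r_gt0 PQ FP.
have [|e [e_nz eK Ke]] := @mxrank1_row _ _ _ (kermx (Q *m F^T)).
  by rewrite mxrank_ker mxrank_form_tr rF; lia.
have /submxP[X PX] := submx_trans (orthogonal_fix_kermx PQ FP) Ke.
move: PQ; have -> : P = 1%:M + X *m e by rewrite -PX addrC subrK.
case/(orthogonal_rank1_update e_nz) => [-> | [ee ->]].
  by left; rewrite mul0mx addr0.
by right; exists e; split=> //; move/sub_kermxP: eK; rewrite mulmxA.
Qed.

End QuadraticSpace.

Local Open Scope complex_scope.

Theorem lemma2p6 (R : realType) (n r : nat) (Q : 'M[R[i]]_r)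
  (hrn : (r <= n)%N) (hr : ~~ odd r) (hQ : nondeg_quadform Q) :
  acts_freely_on (GO0 Q)
    (fun F : 'M[R[i]]_(n, r) =>
       CZ r n (tau Q F) \/ CZ (r - 1)%N n (tau Q F)).
Proof.
case: hQ => Q_sym Q_unit F P tauF GO0P FP.
have : r != 1%N by apply: contraNneq hr => ->.
have [r0 _ | r_ge2 _] : r = 0%N \/ (2 <= r)%N by lia.
  by apply/matrixP => i; have := ltn_ord i; rewrite [X in (_ < X)%N]r0.
have rF_le := rank_leq_col F.
have rtau_le : (\rank (tau Q F) <= \rank F)%N.
  exact: leq_trans (mxrankM_maxl _ _) (mxrankM_maxl _ _).
have [rF | rF] : \rank F = r \/ \rank F = r.-1 by case: tauF => -[_ rk]; lia.
  have /row_fullP[B BF] : row_full F by rewrite /row_full rF.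
  by rewrite -[P]mul1mx -BF -mulmxA FP.
have tau_nz : tau Q F != 0 by rewrite -mxrank_eq0; case: tauF => -[_ ->]; lia.
have [x xx] := anisotropic_exists (trmx_form Q_sym F F) tau_nz.
rewrite omega_tau in xx.
have PQ : P *m Q *m P^T = Q.
  by apply: (GO_fix_orthogonal Q_sym GO0P.1 _ xx); rewrite -mulmxA FP.
have [//|[e [ee eF Pe]]] :=
  orthogonal_fix_corank1 Q_sym Q_unit rF (ltnW r_ge2) PQ FP.
case: (reflection_notin_GO0 Q_sym Q_unit r_ge2 ee xx); last by rewrite -Pe.
by rewrite (omega_sym _ _ Q_sym) /omega trmx_mul mulmxA eF mul0mx mxE.
Qed.
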